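(* For every integer $N\ge1$, $$\phi_N(y,z)=\{(q-1)z\}^{-N(N-1)/2}q^{-(N-2)(N-1)N/6}\det\Big(p_{2(N-i)+1}\big(y,q^{N-j}z\big)\Big)_{i,j=1}^{N},$$ i.e. the determinant has first row $p_{2N-1}(y,q^{N-1}z),p_{2N-1}(y,q^{N-2}z),\dots,p_{2N-1}(y,z)$ and last row $p_1(y,q^{N-1}z),\dots,p_1(y,z)$.
   Context: $q$ is a fixed nonzero complex constant that is not a root of unity; $y,z$ are variables. For $k\in\mathbb{Z}$ the polynomials $p_k(y,z)$ are defined by the generating function $\sum_{n\ge 0}p_n(y,z)t^n=\frac{(-(1-q)t;q)_\infty}{((1-q)yt;q)_\infty((1-q)zt;q)_\infty}$, with $(a;q)_\infty=\prod_{i\ge0}(1-aq^i)$, and $p_k=0$ for $k<0$; equivalently $p_n(y,z)=(1-q)^n\sum_{a+b+c=n}\frac{y^a z^b q^{c(c-1)/2}}{(q;q)_a(q;q)_b(q;q)_c}$ with $(q;q)_m=\prod_{j=1}^m(1-q^j)$. For $N>0$, $\phi_N(y,z)=\det\big(p_{N-2i+j+1}(y,z)\big)_{i,j=1}^N$. *)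

From HB Require Import structures.
From mathcomp Require Import all_boot all_order all_algebra.
From mathcomp Require Import reals complex.
Set Implicit Arguments. Unset Strict Implicit. Unset Printing Implicit Defensive.
Import Order.TTheory GRing.Theory Num.Theory.
Local Open Scope ring_scope.

Section Defs.
Variable C : fieldType.

Definition qpoch (q : C) (m : nat) : C := \prod_(j < m) (1 - q ^+ j.+1).

Definition pn (q : C) (n : nat) (y z : C) : C :=
  (1 - q) ^+ n *
  \sum_(a < n.+1) \sum_(b < (n - a).+1)
     let c := (n - a - b)%N in
     y ^+ a * z ^+ b * q ^+ ((c * c.-1) %/ 2)
       / (qpoch q a * qpoch q b * qpoch q c).

Definition pk (q : C) (k : int) (y z : C) : C :=
  if (k < 0)%R then 0 else pn q `|k|%N y z.

(* phi_N(y,z) = det (p_{N-2i+j+1}(y,z))_{i,j=1}^N ; 0-indexed: p_{N-2i+j} *)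
Definition phi (q : C) (N : nat) (y z : C) : C :=
  \det (\matrix_(i < N, j < N) pk q (N%:Z - 2 * i%:Z + j%:Z) y z).
End Defs.

From HB Require Import structures.
From mathcomp Require Import all_boot all_order all_algebra.
From mathcomp Require Import reals complex.
From mathcomp Require Import ring zify.
Import Order.TTheory GRing.Theory Num.Theory.
Set Implicit Arguments. Unset Strict Implicit. Unset Printing Implicit Defensive.
Local Open Scope ring_scope.

(* Replacing z by q z multiplies the generating function of the p_n by
   1 - (1 - q) z t, so p_n(y, q z) = p_n(y, z) + (q - 1) z p_(n-1)(y, z).
   Iterating, p_n(y, q^k z) = sum_m e_m p_(n-m)(y, z), where e_m is the
   coefficient of t^m in prod_(i<k) (1 + (q - 1) q^i z t).  Hence the matrix on
   the right-hand side is the matrix of phi_N times a triangular matrix whose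
   diagonal entries are the leading coefficients ((q - 1) z)^k q^(k(k-1)/2),
   k < N. *)

Section Convolution.
Variable C : comPzRingType.

Definition conv (u v : nat -> C) (n : nat) : C := \sum_(a < n.+1) u a * v (n - a)%N.

Lemma convC u v n : conv u v n = conv v u n.
Proof.
rewrite /conv (reindex_inj rev_ord_inj); apply: eq_bigr => a _.
by rewrite mulrC /= subSS subKn // -ltnS.
Qed.

Variable q : C.

(* The coefficientwise form of u(q z, t) = (1 - z t) u(z, t) for the
   generating series u(z, t) = sum_m u z m t^m. *)
Definition qshift_rule (u : C -> nat -> C) : Prop :=
  forall z m, u (q * z) m = u z m - (if m is m'.+1 then z * u z m' else 0).

Lemma conv_qshift u v : qshift_rule u -> qshift_rule (fun z => conv (u z) v).
Proof.
move=> uq z [|m] /=; first by rewrite /conv !big_ord1 uq /= !subr0.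
rewrite /conv big_ord_recl [in RHS]big_ord_recl uq subr0 -addrA; congr (_ + _).
rewrite mulr_sumr -sumrB; apply: eq_bigr => a _.
by rewrite uq /= mulrBl mulrA.
Qed.

End Convolution.

Section QShift.
Variables (C : fieldType) (q : C).
Hypothesis q_not_root : forall n : nat, (0 < n)%N -> q ^+ n != 1.

Lemma qpochS n : qpoch q n.+1 = qpoch q n * (1 - q ^+ n.+1).
Proof. by rewrite /qpoch big_ord_recr. Qed.

Lemma qpoch_neq0 n : qpoch q n != 0.
Proof. by apply/prodf_neq0 => i _; rewrite subr_eq0 eq_sym q_not_root. Qed.

Definition qexp_coef (x : C) (a : nat) : C := x ^+ a / qpoch q a.

Definition qeuler_coef (c : nat) : C := q ^+ ((c * c.-1) %/ 2) / qpoch q c.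

Lemma qexp_coef_qshift : qshift_rule q qexp_coef.
Proof.
move=> z [|b]; first by rewrite /qexp_coef !expr0 subr0.
have qb_neq0 : 1 - q ^+ b.+1 != 0 by rewrite subr_eq0 eq_sym q_not_root.
have P_neq0 := qpoch_neq0 b.
rewrite /qexp_coef qpochS exprMn [z ^+ b.+1]exprS.
move: qb_neq0 P_neq0; move: (qpoch q b) (q ^+ b.+1) => P Q Q_neq0 P_neq0.
by field; rewrite P_neq0 Q_neq0.
Qed.

Lemma pn_conv n y z :
  pn q n y z = (1 - q) ^+ n * conv (qexp_coef y) (conv (qexp_coef z) qeuler_coef) n.
Proof.
rewrite /pn; congr (_ * _); apply: eq_bigr => a _.
rewrite /conv mulr_sumr; apply: eq_bigr => b _.
by rewrite /qexp_coef /qeuler_coef !invfM; ring.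
Qed.

Lemma pn_qshift n y z : pn q n y (q * z) =
  pn q n y z - (if n is n'.+1 then (1 - q) * z * pn q n' y z else 0).
Proof.
have conv_qshift2 : qshift_rule q (fun z => conv (conv (qexp_coef z) qeuler_coef) (qexp_coef y)).
  by do 2 apply: conv_qshift; exact: qexp_coef_qshift.
case: n => [|n]; rewrite !pn_conv !(convC (qexp_coef y)) conv_qshift2 ?subr0 //.
by rewrite exprS; ring.
Qed.

Lemma pk_qshift (n : int) y z :
  pk q n y (q * z) = pk q n y z - (1 - q) * z * pk q (n - 1) y z.
Proof.
rewrite /pk; case: n => [[|n]|n] /=; rewrite ?mulr0 ?subr0 //.
  by rewrite pn_qshift subr0.
by rewrite subn1 pn_qshift.
Qed.

End QShift.

Section ShiftExpansion.
Variable C : comNzRingType.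

Definition linprod (c : nat -> C) (k : nat) : {poly C} := \prod_(i < k) (1 + c i *: 'X).

Lemma coef_linprodS c k m : (linprod c k.+1)`_m =
  (linprod c k)`_m + (if m is m'.+1 then c k * (linprod c k)`_m' else 0).
Proof.
rewrite /linprod big_ord_recr /= mulrDr mulr1 coefD -scalerAr coefZ coefMX.
by case: m => [|m]; rewrite ?mulr0.
Qed.

Lemma coef_linprod_gt c k m : (k < m)%N -> (linprod c k)`_m = 0.
Proof.
elim: k m => [|k IHk] [|m] // lt_km; first by rewrite /linprod big_ord0 coef1.
by rewrite coef_linprodS !IHk ?mulr0 ?addr0 // ltnW.
Qed.

Lemma coef_linprod_diag c k : (linprod c k)`_k = \prod_(i < k) c i.
Proof.
elim: k => [|k IHk]; first by rewrite /linprod !big_ord0 coef1.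
by rewrite coef_linprodS IHk coef_linprod_gt // add0r big_ord_recr mulrC.
Qed.

Variables (c : nat -> C) (f : nat -> int -> C).
Hypothesis f_step : forall k n, f k.+1 n = f k n + c k * f k (n - 1).

Lemma shift_expansion k n :
  f k n = \sum_(m < k.+1) (linprod c k)`_m * f 0 (n - m%:Z).
Proof.
elim: k n => [|k IHk] n; first by rewrite big_ord1 /linprod big_ord0 coef1 mul1r subr0.
rewrite f_step !IHk mulr_sumr.
under [RHS]eq_bigr => m _ do rewrite coef_linprodS mulrDl.
rewrite big_split /= [X in _ = X + _]big_ord_recr [X in _ = _ + X]big_ord_recl /=.
rewrite coef_linprod_gt // !mul0r addr0 add0r.
congr (_ + _); apply: eq_bigr => m _.
by rewrite mulrA; congr (_ * f 0 _); rewrite /bump /=; lia.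
Qed.

Lemma shift_expansion_wide K k n : (k < K)%N ->
  f k n = \sum_(m < K) (linprod c k)`_m * f 0 (n - m%:Z).
Proof.
move=> lt_kK; rewrite shift_expansion.
rewrite (big_ord_widen K (fun m : nat => (linprod c k)`_m * f 0 (n - m%:Z)) lt_kK).
rewrite big_mkcond; apply: eq_bigr => m _; case: ltnP => // le_km.
by rewrite coef_linprod_gt ?mul0r.
Qed.

Definition shift_mx N : 'M[C]_N := \matrix_(l, j) (linprod c (N - 1 - j))`_(N - 1 - l).

Lemma shift_mx_factor N (g : 'I_N -> int) :
  \matrix_(i, j) f (N - 1 - j) (g i) =
  (\matrix_(i, l) f 0 (g i - (N - 1 - l)%N%:Z)) *m shift_mx N.
Proof.
apply/matrixP => i j; rewrite !mxE (shift_expansion_wide (K := N)); last first.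
  by have := ltn_ord j; lia.
rewrite (reindex_inj rev_ord_inj); apply: eq_bigr => l _; rewrite !mxE mulrC.
by congr (_ * _); [congr (f 0 (_ - _)) | congr (_`_ _)]; rewrite /=; lia.
Qed.

Lemma det_shift_mx N : \det (shift_mx N) = \prod_(k < N) \prod_(i < k) c i.
Proof.
rewrite det_trig; last first.
  apply/forallP => l; apply/forallP => j; apply/implyP => lt_lj.
  by rewrite mxE coef_linprod_gt //; have := ltn_ord j; lia.
rewrite (reindex_inj rev_ord_inj); apply: eq_bigr => k _; rewrite mxE /=.
have -> : (N - 1 - (N - k.+1) = k)%N by have := ltn_ord k; lia.
exact: coef_linprod_diag.
Qed.

End ShiftExpansion.

Lemma sum_bin_ord n m : (\sum_(k < n) 'C(k, m))%N = 'C(n, m.+1).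
Proof. by elim: n => [|n IHn]; rewrite ?big_ord0 // big_ord_recr /= IHn binS addnC. Qed.

Lemma prod_triangle_pow (R : comPzSemiRingType) (a x : R) N :
  \prod_(k < N) \prod_(i < k) (a * x ^+ i) = a ^+ 'C(N, 2) * x ^+ 'C(N, 3).
Proof.
under eq_bigr => k _ do rewrite big_split /= prodr_const card_ord prodrXr.
rewrite big_split /= !prodrXr -!sum_bin_ord; congr (_ ^+ _ * _ ^+ _).
  by apply: eq_bigr => k _; rewrite bin1.
by apply: eq_bigr => k _; rewrite -sum_bin_ord; apply: eq_bigr => i _; rewrite bin1.
Qed.

Lemma bin2_div n : ('C(n, 2) = (n * (n - 1)) %/ 2)%N.
Proof. by rewrite bin2 -divn2 subn1. Qed.

Lemma bin3_div n : ('C(n, 3) = ((n - 2) * (n - 1) * n) %/ 6)%N.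
Proof.
rewrite bin_ffactd !ffactnS ffactn0 muln1 /= -!subn1 -subnDA.
by rewrite [(n * _)%N]mulnC [((n - 1) * _)%N]mulnC.
Qed.

Lemma pn_shift_mx_factor (C : fieldType) (q y z : C) N :
    (forall n : nat, (0 < n)%N -> q ^+ n != 1) ->
  \matrix_(i < N, j < N) pn q (2 * (N - 1 - i) + 1) y (q ^+ (N - 1 - j) * z) =
  (\matrix_(i < N, j < N) pk q (N%:Z - 2 * i%:Z + j%:Z) y z)
    *m shift_mx (fun i => (q - 1) * z * q ^+ i) N.
Proof.
move=> q_not_root; pose f k n := pk q n y (q ^+ k * z).
have f_step k n : f k.+1 n = f k n + (q - 1) * z * q ^+ k * f k (n - 1).
  by rewrite /f exprS -mulrA pk_qshift //; ring.
have -> : \matrix_(i < N, j < N) pn q (2 * (N - 1 - i) + 1) y (q ^+ (N - 1 - j) * z)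
    = \matrix_(i < N, j < N) f (N - 1 - j)%N (2 * (N - 1 - i) + 1)%N%:Z.
  by apply/matrixP => i j; rewrite !mxE.
rewrite (shift_mx_factor f_step); congr (_ *m _).
apply/matrixP => i l; rewrite !mxE /f expr0 mul1r; congr (pk q _ y z).
by have := ltn_ord i; have := ltn_ord l; lia.
Qed.

Theorem lemma4 (R : realType) (q y z : R[i]) (N : nat)
  (hq0 : q != 0) (hq_not_root : forall n : nat, (0 < n)%N -> q ^+ n != 1)
  (hz : z != 0) (hN : (1 <= N)%N) :
  phi q N y z =
    ((q - 1) * z) ^- ((N * (N - 1)) %/ 2) * q ^- (((N - 2) * (N - 1) * N) %/ 6)
    * \det (\matrix_(i < N, j < N)
              pn q (2 * (N - 1 - i) + 1) y (q ^+ (N - 1 - j) * z)).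
Proof.
(* The identity also holds for N = 0, where both sides are 1. *)
rewrite pn_shift_mx_factor // det_mulmx det_shift_mx prod_triangle_pow.
rewrite -bin2_div -bin3_div /phi.
have qz_neq0 : (q - 1) * z != 0 by rewrite mulf_neq0 // subr_eq0 -(expr1 q) hq_not_root.
move: (expf_neq0 'C(N, 2) qz_neq0) (expf_neq0 'C(N, 3) hq0).
move: (((q - 1) * z) ^+ _) (q ^+ _) => X Y X_neq0 Y_neq0.
by field; rewrite X_neq0 Y_neq0.
Qed.
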